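(* Let $n\ge0$ and run the Tiden–Arnborg algorithm on $\sigma(n)$, performing sum transformations level by level. For every level $k<n+3$, a path of lateral edges from $x_{1^{k-1}}$ to $y_{2^{k-1}}$ is created.
   Context: Variables are $T$, $x_s$, $y_s$ with $s$ a string over $\{1,2\}$ ($x=x_\varepsilon$, $y=y_\varepsilon$); the level of $x_s$ or $y_s$ is $|s|+1$. For $n\ge0$, $\sigma(n)$ consists of, for all $0\le i\le n$: $x_{1^i}=^?x_{1^{i+1}}+x_{1^i2}$, $y_{2^i}=^?y_{2^i1}+y_{2^{i+1}}$, $y_{2^i1}=^?T\times x_{1^i2}$, $x=^?T\times y$, $x_{1^{i+1}}=^?x_{1^{i+2}}+x_{1^{i+1}2}$; its variables occupy levels $1,\dots,n+3$. A lateral edge from $u$ to $v$ means the equation $u=^?T\times v$ is present. A variable $U_i$ ($U\in\{x,y\}$) is a peak if the system contains both $U_i=^?U_{i1}+U_{i2}$ and $U_i=^?T\times W_j$. A sum transformation at a peak $U_i$ replaces $U_i=^?U_{i1}+U_{i2}$ by $W_j=^?W_{j1}+W_{j2}$, $U_{i1}=^?T\times W_{j1}$, $U_{i2}=^?T\times W_{j2}$ (keeping $U_i=^?T\times W_j$), with $W_{j1},W_{j2}$ identified with the existing children of $W_j$ if $W_j$ already has a sum equation. The Tiden–Arnborg algorithm (for $x\times(y+z)=x\times y+x\times z$) applies sum transformations as long as possible, completing all those at one level before the next. *)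

(* Systems of unification problems for x*(y+z)=x*y+x*z
   as they arise when running the Tiden-Arnborg algorithm on sigma(n). *)
From Stdlib Require Import List Relations.
Import ListNotations.

Inductive dir := D1 | D2.
Inductive tag := X | Y.

(* variable U_s, U in {x,y}, s a string over {1,2}; x = (X,[]), y = (Y,[]) *)
Definition var : Type := (tag * list dir)%type.

Definition level (v : var) : nat := S (length (snd v)).

Definition child (v : var) (d : dir) : var := (fst v, snd v ++ [d]).

(* A system: the set of variables U having a sum equation
   U =? U_1 + U_2 (children are always named by extending the index string),
   and the lateral edges: lat u v  iff the equation u =? T x v is present. *)
Record system := mkSystem {
  sums : var -> Prop;
  lat  : var -> var -> Prop
}.

Definition x_ (s : list dir) : var := (X, s).
Definition y_ (s : list dir) : var := (Y, s).
Definition ones (i : nat) : list dir := repeat D1 i.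
Definition twos (i : nat) : list dir := repeat D2 i.

(* sigma(n): for all 0 <= i <= n:
   x_{1^i} = x_{1^{i+1}} + x_{1^i 2},  y_{2^i} = y_{2^i 1} + y_{2^{i+1}},
   y_{2^i 1} = T x x_{1^i 2},  x = T x y,
   x_{1^{i+1}} = x_{1^{i+2}} + x_{1^{i+1} 2}. *)
Definition sigma (n : nat) : system := {|
  sums := fun v => exists i, i <= n /\
            (v = x_ (ones i) \/ v = y_ (twos i) \/ v = x_ (ones (S i)));
  lat := fun u v => exists i, i <= n /\
            ((u = x_ [] /\ v = y_ []) \/
             (u = y_ (twos i ++ [D1]) /\ v = x_ (ones i ++ [D2])))
|}.

Definition peak (s : system) (u w : var) : Prop := sums s u /\ lat s u w.

(* sum transformation at peak u with lateral equation u =? T x w: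
   remove u = u1 + u2, add w = w1 + w2 (identified with the existing one if
   present), add u1 =? T x w1 and u2 =? T x w2, keep u =? T x w. *)
Definition sum_transform (s : system) (u w : var) : system := {|
  sums := fun v => (sums s v /\ v <> u) \/ v = w;
  lat := fun a b => lat s a b \/
            (a = child u D1 /\ b = child w D1) \/
            (a = child u D2 /\ b = child w D2)
|}.

Inductive ta_reachable (n : nat) : system -> Prop :=
| ta_start : ta_reachable n (sigma n)
| ta_step : forall s u w,
    ta_reachable n s ->
    peak s u w ->
    (forall u' w', peak s u' w' -> level u <= level u') ->
    ta_reachable n (sum_transform s u w).

Definition lat_path (s : system) : var -> var -> Prop :=
  clos_refl_trans var (lat s).

(* Every lateral edge of a reachable system joins a variable to its
   "partner": x_t to y_t, and y_(2^i 1 t) to x_(1^i 2 t). Partners have the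
   same level and commute with appending a letter, so lateral edges are
   functional. Call a variable expanded when it carries a sum equation, or
   when it was transformed along its lateral edge u -> w to an expanded w,
   producing the edges u_1 -> w_1 and u_2 -> w_2. If no peak remains below
   level k, a lateral path out of an expanded variable of level < k never
   meets a sum equation, so it lifts to the paths between the first and
   between the second children. Induction on j then builds
     x_(1^(j+1)) ->* y_(2^j 1) -> x_(1^j 2) ->* y_(2^(j+1))
   from the initial edge x -> y, with the middle edge taken from sigma(n). *)
From Stdlib Require Import List Relations Lia.
Import ListNotations.

Fixpoint y_partner (t : list dir) : option (list dir) :=
  match t with
  | [] => None
  | D1 :: r => Some (D2 :: r)
  | D2 :: r => option_map (cons D1) (y_partner r)
  end.

Definition partner (v : var) : option var :=
  match v with
  | (X, t) => Some (Y, t)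
  | (Y, t) => option_map (pair X) (y_partner t)
  end.

Lemma y_partner_app t t' r :
  y_partner t = Some t' -> y_partner (t ++ r) = Some (t' ++ r).
Proof.
  revert t'; induction t as [|[|] t IH]; intros t' E; simpl in *; try discriminate.
  - now injection E as <-.
  - destruct (y_partner t) as [t0|]; try discriminate.
    injection E as <-. now rewrite (IH t0 eq_refl).
Qed.

Lemma y_partner_length t t' : y_partner t = Some t' -> length t' = length t.
Proof.
  revert t'; induction t as [|[|] t IH]; intros t' E; simpl in *; try discriminate.
  - now injection E as <-.
  - destruct (y_partner t) as [t0|]; try discriminate.
    injection E as <-. simpl. now rewrite (IH t0 eq_refl).
Qed.

Lemma y_partner_twos_D1 i : y_partner (twos i ++ [D1]) = Some (ones i ++ [D2]).
Proof. unfold twos, ones; induction i as [|i IH]; simpl; [reflexivity|now rewrite IH]. Qed.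

Lemma partner_child a b d :
  partner a = Some b -> partner (child a d) = Some (child b d).
Proof.
  destruct a as [[|] t]; simpl.
  - now intros [= <-].
  - destruct (y_partner t) as [t'|] eqn:E; simpl; [|discriminate].
    intros [= <-]. unfold child; simpl. now rewrite (y_partner_app _ _ _ E).
Qed.

Lemma partner_level a b : partner a = Some b -> level b = level a.
Proof.
  unfold level; destruct a as [[|] t]; simpl.
  - now intros [= <-].
  - destruct (y_partner t) as [t'|] eqn:E; simpl; [|discriminate].
    intros [= <-]. simpl. now rewrite (y_partner_length _ _ E).
Qed.

Lemma sigma_lat_partner n a b : lat (sigma n) a b -> partner a = Some b.
Proof.
  simpl; intros [i [_ [[-> ->] | [-> ->]]]]; [reflexivity|].
  simpl. now rewrite y_partner_twos_D1.
Qed.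

Lemma var_eq_dec (u v : var) : {u = v} + {u <> v}.
Proof. repeat decide equality. Qed.

Record ta_invariant (n : nat) (s : system) (expanded : var -> Prop) : Prop := {
  expanded_cases : forall v, expanded v -> sums s v \/
    exists w, lat s v w /\ expanded w /\
      lat s (child v D1) (child w D1) /\ lat s (child v D2) (child w D2);
  expanded_ones : forall i, i <= S n -> expanded (x_ (ones i));
  lat_sigma : forall a b, lat (sigma n) a b -> lat s a b;
  lat_partner : forall a b, lat s a b -> partner a = Some b
}.

Lemma ta_invariant_sigma n :
  ta_invariant n (sigma n) (fun v => exists i, i <= S n /\ v = x_ (ones i)).
Proof.
  constructor; eauto using sigma_lat_partner.
  intros v [i [Hi ->]]; left; simpl.
  destruct (PeanoNat.Nat.eq_dec i (S n)) as [->|Hne].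
  - exists n; auto.
  - exists i; split; [lia|auto].
Qed.

Lemma ta_invariant_sum_transform n s E u w :
  ta_invariant n s E -> peak s u w ->
  ta_invariant n (sum_transform s u w) (fun v => E v \/ v = w).
Proof.
  intros I [Hsum Hlat]; constructor; simpl.
  - intros v [Hv | ->]; [|auto].
    destruct (expanded_cases _ _ _ I v Hv) as [Hs | [w0 [H0 [HE [H1 H2]]]]].
    + destruct (var_eq_dec v u) as [->|Hne].
      * right; exists w; repeat split; auto.
      * left; auto.
    + right; exists w0; repeat split; auto.
  - intros i Hi; left; exact (expanded_ones _ _ _ I i Hi).
  - intros a b H; left; exact (lat_sigma _ _ _ I a b H).
  - pose proof (lat_partner _ _ _ I _ _ Hlat) as Huw.
    intros a b [H | [[-> ->] | [-> ->]]];
      [exact (lat_partner _ _ _ I _ _ H) | apply partner_child, Huw ..].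
Qed.

Lemma ta_reachable_invariant n s :
  ta_reachable n s -> exists E, ta_invariant n s E.
Proof.
  induction 1 as [|s u w _ [E I] Hpeak _].
  - eexists; apply ta_invariant_sigma.
  - eexists; eapply ta_invariant_sum_transform; eauto.
Qed.

Section NoPeakBelow.

Variables (n : nat) (s : system) (E : var -> Prop) (k : nat).
Hypothesis I : ta_invariant n s E.
Hypothesis no_peak_below : forall u w, peak s u w -> k <= level u.

Lemma lat_path_child a b :
  clos_refl_trans_1n _ (lat s) a b -> E a -> level a < k ->
  forall d, lat_path s (child a d) (child b d).
Proof.
  induction 1 as [a | a a1 b H _ IH]; intros Ha Hlev d; [apply rt_refl|].
  destruct (expanded_cases _ _ _ I a Ha) as [Hs | [w [Hw [Ew [H1 H2]]]]].
  - specialize (no_peak_below a a1 (conj Hs H)); lia.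
  - assert (w = a1) as ->.
    { pose proof (lat_partner _ _ _ I _ _ Hw).
      pose proof (lat_partner _ _ _ I _ _ H). congruence. }
    rewrite <- (partner_level _ _ (lat_partner _ _ _ I _ _ H)) in Hlev.
    apply rt_trans with (child a1 d); [apply rt_step; destruct d; assumption|].
    apply IH; assumption.
Qed.

Lemma lat_path_ones_twos j :
  j < k -> k < n + 3 -> lat_path s (x_ (ones j)) (y_ (twos j)).
Proof.
  intros Hj Hk; induction j as [|j IH].
  - apply rt_step, (lat_sigma _ _ _ I); simpl; exists 0; split; [lia|auto].
  - apply clos_rt_rt1n in IH; [|lia].
    assert (Ex : E (x_ (ones j))) by (apply (expanded_ones _ _ _ I); lia).
    assert (Lx : level (x_ (ones j)) < k)
      by (unfold level, ones; simpl; rewrite repeat_length; lia).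
    pose proof (lat_path_child _ _ IH Ex Lx D1) as P1.
    pose proof (lat_path_child _ _ IH Ex Lx D2) as P2.
    unfold child in P1, P2; simpl in P1, P2.
    unfold ones, twos in *; simpl; rewrite !repeat_cons.
    eapply rt_trans; [exact P1|]; eapply rt_trans; [|exact P2].
    apply rt_step, (lat_sigma _ _ _ I); simpl; exists j; split; [lia|auto].
Qed.

End NoPeakBelow.

Theorem lemma5 (n : nat) (s : system) (k : nat) :
  ta_reachable n s ->
  1 <= k -> k < n + 3 ->
  (* all sum transformations at levels < k have been completed *)
  (forall u w, peak s u w -> k <= level u) ->
  lat_path s (x_ (ones (k - 1))) (y_ (twos (k - 1))).
Proof.
  intros R Hk1 Hk2 Hk.
  destruct (ta_reachable_invariant _ _ R) as [E I].
  apply (lat_path_ones_twos n s E k I Hk); lia.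
Qed.
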